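(* Let $m \geq 1$ and let $d$ be a positive integer with $\gcd(d, 2^m-1)=1$. For $a \in \mathrm{GF}(2^m)$ define $$W_d(a) = \sum_{x \in \mathrm{GF}(2^m)} (-1)^{\mathrm{Tr}(x^d + a x)},$$ where $\mathrm{Tr}\colon \mathrm{GF}(2^m)\to\mathrm{GF}(2)$ is the absolute trace. Suppose that $W_d(a)$ takes precisely three distinct values $A$, $B$, $C$ for $a \in \mathrm{GF}(2^m)^*$. If $A$, $B$, $C$ are all nonzero, then $2^{m+1}$ divides $AB$.
   Context: $W_d$ is the Walsh transform of the power map $x\mapsto x^d$ on $\mathrm{GF}(2^m)$. *)

From HB Require Import structures.
From mathcomp Require Import all_boot all_order all_algebra all_field.
Set Implicit Arguments. Unset Strict Implicit. Unset Printing Implicit Defensive.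
Import GRing.Theory Num.Theory.
Local Open Scope ring_scope.

(* Absolute trace of GF(2^m) over GF(2): Tr(x) = sum_{i<m} x^(2^i).
   Its value lies in the prime subfield {0,1} of F. *)
Definition abs_trace (F : finFieldType) (m : nat) (x : F) : F :=
  \sum_(i < m) x ^+ (2 ^ i).

Definition chi_tr (F : finFieldType) (m : nat) (y : F) : int :=
  if abs_trace m y == 0 then 1 else -1.

Definition walsh (F : finFieldType) (m d : nat) (a : F) : int :=
  \sum_(x : F) chi_tr m (x ^+ d + a * x).

(* The first three power moments of the Walsh spectrum are
   sum_a W(a) = q, sum_a W(a)^2 = q^2 and sum_a W(a)^3 = q T, where q = 2^m and
   T = sum_(x,y) (-1)^Tr(x^d + y^d + (x+y)^d) is itself divisible by q, being
   invariant under the scalings (x, y) |-> (c x, c y).  As W(0) = 0 and W only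
   takes the values A, B, C on F^*, sum_a (W(a)-A)(W(a)-B)(W(a)-C) = -ABC, which
   ties A, B, C to these moments.  All W(a) are even; if 2q did not divide AB,
   the resulting relation would force q | C, and then A^2 + C^2 <= q^2
   (Parseval) is impossible for nonzero A and C. *)
From HB Require Import structures.
From mathcomp Require Import all_boot all_order all_algebra all_field.
From mathcomp Require Import zify ring.
Set Implicit Arguments. Unset Strict Implicit. Unset Printing Implicit Defensive.
Import Order.TTheory GRing.Theory Num.Theory.
Local Open Scope ring_scope.

Section AbsoluteTrace.

Variables (F : finFieldType) (m : nat).
Hypothesis cardF : #|F| = (2 ^ m)%N.

Lemma pchar2 : 2 \in [pchar F].
Proof. exact: card_finPcharP cardF _. Qed.

Lemma log2_card_gt0 : (0 < m)%N.
Proof. by have := card_finNzRing_gt1 F; rewrite cardF; case: (m). Qed.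

Lemma abs_trace0 : abs_trace m (0 : F) = 0.
Proof. by rewrite /abs_trace big1 // => i _; rewrite expr0n expn_eq0. Qed.

Lemma abs_traceD (x y : F) :
  abs_trace m (x + y) = abs_trace m x + abs_trace m y.
Proof.
rewrite /abs_trace -big_split; apply: eq_bigr => i _.
by apply: exprDn_pchar; rewrite pnatX pnatE ?pchar2.
Qed.

Lemma abs_trace_sqr (x : F) : abs_trace m x ^+ 2 = abs_trace m x.
Proof.
have sqrD (u v : F) : (u + v) ^+ 2 = u ^+ 2 + v ^+ 2.
  by apply: exprDn_pchar; rewrite pnatE ?pchar2.
rewrite /abs_trace (big_morph _ sqrD (expr0n _ _)).
under eq_bigr => i _ do rewrite -exprM -expnSr.
have xm : x ^+ (2 ^ m) = x by rewrite -cardF expf_card.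
case: m xm log2_card_gt0 => // k xm _.
by rewrite big_ord_recr big_ord_recl /= xm addrC.
Qed.

Lemma abs_trace01 (x : F) : abs_trace m x = 0 \/ abs_trace m x = 1.
Proof.
have /eqP : abs_trace m x * (abs_trace m x - 1) = 0.
  by rewrite mulrBr mulr1 -expr2 abs_trace_sqr subrr.
by rewrite mulf_eq0 subr_eq0 => /orP[] /eqP ->; [left | right].
Qed.

Lemma exists_abs_trace1 : exists b : F, abs_trace m b = 1.
Proof.
(* Tr is a polynomial of degree 2^(m-1) < #|F|, so it cannot vanish on all of F. *)
have [k mk] : exists k, m = k.+1 by exists m.-1; rewrite prednK ?log2_card_gt0.
pose p : {poly F} := \sum_(i < m) 'X^(2 ^ i).
have pE x : p.[x] = abs_trace m x.
  by rewrite horner_sum; apply: eq_bigr => i _; rewrite hornerXn.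
have p_neq0 : p != 0.
  apply: contra_neq (@oner_neq0 F) => p0.
  have := congr1 (coefp (2 ^ k)) p0; rewrite /= coef0 coef_sum mk big_ord_recr /=.
  rewrite coefXn eqxx big1 ?add0r // => i _.
  by rewrite coefXn eqn_exp2l // gtn_eqF.
have size_p : (size p <= (2 ^ k).+1)%N.
  apply: leq_trans (size_sum _ _ _) _; apply/bigmax_leqP => j _.
  by rewrite size_polyXn ltnS leq_exp2l // -ltnS -mk.
have [b pb_neq0] : exists b, ~~ root p b.
  apply/existsP; rewrite -negb_forall; apply/negP => /forallP p0.
  have all_roots : all (root p) (enum F) by apply/allP => x _; exact: p0.
  have := leq_trans (max_poly_roots p_neq0 all_roots (enum_uniq F)) size_p.
  by rewrite -cardE cardF mk expnS; have := expn_gt0 2 k; lia.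
by exists b; case: (abs_trace01 b) pb_neq0; rewrite /root pE => ->; rewrite ?eqxx.
Qed.

Lemma chi_tr0 : chi_tr m (0 : F) = 1.
Proof. by rewrite /chi_tr abs_trace0 eqxx. Qed.

Lemma chi_trD (u v : F) : chi_tr m (u + v) = chi_tr m u * chi_tr m v.
Proof.
rewrite /chi_tr abs_traceD.
case: (abs_trace01 u) => ->; case: (abs_trace01 v) => ->;
  rewrite ?addr0 ?add0r ?eqxx ?oner_eq0 ?mulr1 ?mul1r ?mulrNN //.
by rewrite (addrr_pchar2 pchar2) eqxx mulr1.
Qed.

Lemma chi_tr_sqr (u : F) : chi_tr m u ^+ 2 = 1.
Proof. by rewrite /chi_tr; case: eqP; rewrite ?expr1n ?sqrrN ?expr1n. Qed.

Lemma sum_chi_tr : \sum_(a : F) chi_tr m a = 0.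
Proof.
have [b trb] := exists_abs_trace1.
have chib : chi_tr m b = -1 by rewrite /chi_tr trb oner_eq0.
have : \sum_(a : F) chi_tr m a = \sum_(a : F) chi_tr m (a + b).
  exact: reindex_inj (addIr b).
under [X in _ = X]eq_bigr => a _ do rewrite chi_trD chib mulrN1.
by rewrite sumrN => /eqP; rewrite -addr_eq0 -mulr2n mulrn_eq0 => /eqP.
Qed.

Lemma sum_chi_tr_mul (z : F) :
  \sum_(a : F) chi_tr m (a * z) = if z == 0 then #|F|%:Z else 0.
Proof.
have [->|z_neq0] := eqVneq z 0.
  by under eq_bigr => a _ do rewrite mulr0 chi_tr0; rewrite sumr_const natz.
by rewrite -[RHS]sum_chi_tr [RHS](reindex_inj (mulIf z_neq0)).
Qed.

End AbsoluteTrace.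

Lemma expf_inj (F : finFieldType) (d : nat) :
  (0 < d)%N -> coprime d #|F|.-1 -> injective (fun x : F => x ^+ d).
Proof.
move=> d_gt0 coprime_d.
(* By Bezout, u d = v (#|F| - 1) + 1, so y |-> y ^+ u inverts x |-> x ^+ d. *)
have [u v] := egcdnP #|F|.-1 d_gt0; rewrite (eqP coprime_d) => duE _.
apply: (can_inj (g := fun y : F => y ^+ u)) => x /=.
have [->|x_neq0] := eqVneq x 0; first by rewrite -exprM mulnC duE addn1 expr0n.
have x_unity : x ^+ #|F|.-1 = 1.
  apply: (mulIf x_neq0); rewrite mul1r -exprSr prednK ?expf_card //.
  exact: ltnW (card_finNzRing_gt1 F).
by rewrite -exprM mulnC duE addn1 exprS mulnC exprM x_unity expr1n mulr1.
Qed.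

Section FourierTrace.

Variables (F : finFieldType) (m : nat).
Hypothesis cardF : #|F| = (2 ^ m)%N.

Definition fourier_tr (g : F -> int) (a : F) : int :=
  \sum_(x : F) g x * chi_tr m (a * x).

(* In characteristic 2, [z + x] is [z - x]. *)
Definition convol (g h : F -> int) (z : F) : int := \sum_(x : F) g x * h (z + x).

Lemma fourier_trM (g h : F -> int) (a : F) :
  fourier_tr g a * fourier_tr h a = fourier_tr (convol g h) a.
Proof.
rewrite /fourier_tr /convol mulr_suml.
under [RHS]eq_bigr => z _ do rewrite mulr_suml.
rewrite [RHS]exchange_big /=; apply: eq_bigr => x _.
rewrite mulr_sumr [RHS](reindex_inj (addIr x)); apply: eq_bigr => y _ /=.
rewrite -addrA (addrr_pchar2 (pchar2 cardF)) addr0.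
by rewrite mulrDr (chi_trD cardF); ring.
Qed.

Lemma sum_fourier_tr (g : F -> int) :
  \sum_(a : F) fourier_tr g a = #|F|%:Z * g 0.
Proof.
rewrite exchange_big /=.
under eq_bigr => x _ do rewrite -mulr_sumr (sum_chi_tr_mul cardF).
rewrite (bigD1 0) //= eqxx big1 ?addr0 1?mulrC // => x /negbTE ->.
by rewrite mulr0.
Qed.

End FourierTrace.

Section WalshMoments.

Variables (F : finFieldType) (m d : nat).
Hypotheses (cardF : #|F| = (2 ^ m)%N) (d_gt0 : (0 < d)%N).

Local Notation W := (walsh (F := F) m d).
Local Notation q := (#|F|%:Z).
Let g (x : F) : int := chi_tr m (x ^+ d).

Lemma walsh_fourier_tr (a : F) : W a = fourier_tr m g a.
Proof. by apply: eq_bigr => x _; rewrite (chi_trD cardF) mulrC. Qed.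

Lemma sum_walsh : \sum_(a : F) W a = q.
Proof.
under eq_bigr => a _ do rewrite walsh_fourier_tr.
by rewrite (sum_fourier_tr cardF) /g expr0n gtn_eqF // chi_tr0 mulr1.
Qed.

Lemma sum_walsh_sqr : \sum_(a : F) W a ^+ 2 = q * q.
Proof.
under eq_bigr => a _ do rewrite expr2 walsh_fourier_tr (fourier_trM cardF).
rewrite (sum_fourier_tr cardF) /convol; congr (_ * _).
under eq_bigr => x _ do rewrite add0r -expr2 chi_tr_sqr.
by rewrite sumr_const natz.
Qed.

Lemma sum_walsh_cube :
  \sum_(a : F) W a ^+ 3 =
  q * \sum_(x : F) \sum_(y : F) chi_tr m (x ^+ d + y ^+ d + (x + y) ^+ d).
Proof.
under eq_bigr => a _ do
  rewrite exprSr expr2 walsh_fourier_tr !(fourier_trM cardF).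
rewrite (sum_fourier_tr cardF); congr (_ * _).
rewrite /convol; apply: eq_bigr => x _.
rewrite add0r mulr_suml; apply: eq_bigr => y _.
by rewrite /g !(chi_trD cardF); ring.
Qed.

Lemma walsh0 : coprime d #|F|.-1 -> W 0 = 0.
Proof.
move=> coprime_d; rewrite -(sum_chi_tr cardF) [RHS](reindex_inj (expf_inj d_gt0 coprime_d)).
by apply: eq_bigr => x _; rewrite mul0r addr0.
Qed.

Lemma walsh_even (a : F) : (2 %| W a)%Z.
Proof.
have -> : W a = \sum_(x : F) (chi_tr m (x ^+ d + a * x) - 1) + q.
  by rewrite sumrB sumr_const natz subrK.
apply: rpredD; first by apply: rpred_sum => x _; rewrite /chi_tr; case: eqP.
by rewrite cardF; case: m (log2_card_gt0 cardF) => // k _; rewrite expnS PoszM dvdz_mulr.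
Qed.

Lemma dvdz_sum_chi_tr_homogeneous (f : F -> F -> F) :
  coprime d #|F|.-1 -> (forall c x y, f (c * x) (c * y) = c ^+ d * f x y) ->
  (q %| \sum_(x : F) \sum_(y : F) chi_tr m (f x y))%Z.
Proof.
(* Scaling (x, y) by c != 0 fixes T, and c |-> c ^+ d permutes F, so summing
   over c gives q * q + (q - 1) T = 0 mod q. *)
move=> coprime_d homf; set T := \sum_x _.
have T_scale c : c != 0 -> \sum_x \sum_y chi_tr m (c ^+ d * f x y) = T.
  move=> c_neq0; rewrite [RHS](reindex_inj (mulfI c_neq0)); apply: eq_bigr => x _.
  by rewrite [RHS](reindex_inj (mulfI c_neq0)); apply: eq_bigr => y _; rewrite homf.
have dvd_avg : (q %| \sum_c \sum_x \sum_y chi_tr m (c ^+ d * f x y))%Z.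
  rewrite exchange_big; apply: rpred_sum => x _.
  rewrite exchange_big; apply: rpred_sum => y _.
  have -> : \sum_c chi_tr m (c ^+ d * f x y) = \sum_e chi_tr m (e * f x y).
    by rewrite [RHS](reindex_inj (expf_inj d_gt0 coprime_d)).
  by rewrite (sum_chi_tr_mul cardF); case: eqP => _; rewrite ?dvdzz ?dvdz0.
have T_avg : \sum_c \sum_x \sum_y chi_tr m (c ^+ d * f x y) = q * q + T *+ #|F|.-1.
  rewrite (bigD1 0) //= (eq_bigr _ T_scale) sumr_const cardC1.
  under eq_bigr => x _ do under eq_bigr => y _ do
    rewrite expr0n gtn_eqF // mul0r chi_tr0.
  by rewrite !sumr_const -mulr_natr natz.
have card_gt0 : (0 < #|F|)%N by rewrite cardF expn_gt0.
have -> : T = T *+ #|F| - T *+ #|F|.-1 by rewrite -{1}(prednK card_gt0) mulrSr addrC addKr.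
rewrite -mulr_natr natz rpredB ?dvdz_mull //.
by move: dvd_avg; rewrite T_avg rpredDl // dvdz_mull.
Qed.

Lemma dvdz_sum_walsh_cube : coprime d #|F|.-1 -> (q * q %| \sum_(a : F) W a ^+ 3)%Z.
Proof.
move=> coprime_d; rewrite sum_walsh_cube dvdz_mul2l; last by rewrite cardF eqz_nat expn_eq0.
apply: (dvdz_sum_chi_tr_homogeneous (f := fun x y => x ^+ d + y ^+ d + (x + y) ^+ d))
  => // c x y.
by rewrite -mulrDr !exprMn -!mulrDr.
Qed.

End WalshMoments.

Lemma pfactor_dvdn_mul (p k x y : nat) : prime p ->
  (p ^ (2 * k) %| x * y)%N -> ~~ (p ^ k.+1 %| x)%N -> (p ^ k %| y)%N.
Proof.
move=> p_pr dvd_xy ndvd_x.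
have [->|y_gt0] := posnP y; first exact: dvdn0.
have [x0|x_gt0] := posnP x; first by rewrite x0 dvdn0 in ndvd_x.
move: dvd_xy ndvd_x; rewrite !pfactor_dvdn ?muln_gt0 ?x_gt0 // lognM //.
lia.
Qed.

Lemma dvdz_cubic_moment (k : nat) (q A B C S : int) :
  (0 < k)%N -> q = (2 ^ k)%:Z -> (2 %| A)%Z -> (2 %| B)%Z -> (q * q %| S)%Z ->
  S - (A + B + C) * (q * q) + (A * B + B * C + C * A) * q - A * B * C * q
    = - (A * B * C) ->
  ((2 ^ k.+1)%:Z %| A * B)%Z \/ (q %| C)%Z.
Proof.
move=> k_gt0 qE /dvdzP[a ->] /dvdzP[b ->] /dvdzP[t ->] moment.
set AB := a * 2 * (b * 2).
have [|ndvd_AB] := boolP ((2 ^ k.+1)%:Z %| AB)%Z; [by left | right].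
(* Solving the relation for C gives C X = q^2 (t - A - B) + A B q, and X = -AB mod 2q. *)
set X := q * q - (a * 2 + b * 2) * q + AB * q - AB.
have X_mul : X * (C + q) = q * q * (t + q - 2 * (a * 2 + b * 2) + AB).
  rewrite /X /AB; lia.
have q2E : (2 ^ k.+1)%:Z = 2 * q by rewrite qE expnS PoszM.
have dvd_XAB : ((2 ^ k.+1)%:Z %| X + AB)%Z.
  have qr : q = 2 * (2 ^ k.-1)%:Z by rewrite qE -{1}(prednK k_gt0) expnS PoszM.
  apply/dvdzP; exists ((2 ^ k.-1)%:Z - a - b + 2 * a * b).
  rewrite q2E /X /AB; nia.
have ndvd_X : ~~ ((2 ^ k.+1)%:Z %| X)%Z.
  by apply: contra ndvd_AB => dvd_X; rewrite -(rpredDl _ dvd_X).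
have dvd_Cq : (q %| C + q)%Z.
  have : (q * q %| X * (C + q))%Z by rewrite X_mul dvdz_mulr.
  rewrite qE !dvdzE !abszM /= -expnD addnn -mul2n.
  by move/pfactor_dvdn_mul; apply; rewrite -?dvdzE.
by move: dvd_Cq; rewrite rpredDr // qE dvdzz.
Qed.

Lemma sum_cubic_values (I : finType) (w : I -> int) (A B C : int) :
  \sum_(i : I) (w i - A) * (w i - B) * (w i - C) =
  \sum_i w i ^+ 3 - (A + B + C) * \sum_i w i ^+ 2 + (A * B + B * C + C * A) * \sum_i w i
    - A * B * C * #|I|%:Z.
Proof.
transitivity (\sum_i (w i ^+ 3 - (A + B + C) * w i ^+ 2 + (A * B + B * C + C * A) * w i
    - A * B * C)); first by apply: eq_bigr => i _; ring.
by rewrite sumrB big_split /= sumrB -!mulr_sumr sumr_const -mulr_natr natz mulrA.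
Qed.

Lemma dvdz_sqr_lt_sqrD (q A C : int) :
  (q %| C)%Z -> A != 0 -> C != 0 -> q ^+ 2 < A ^+ 2 + C ^+ 2.
Proof.
move=> /dvdzP[k ->] A_neq0; rewrite mulf_eq0 negb_or => /andP[k_neq0 _].
have A2_gt0 : 0 < A ^+ 2 by rewrite exprn_even_gt0.
have : q ^+ 2 <= k ^+ 2 * q ^+ 2.
  by rewrite ler_peMl ?sqr_ge0 // -gtz0_ge1 exprn_even_gt0.
rewrite exprMn; lia.
Qed.

Lemma sqrD_le_sum_sqr (I : finType) (w : I -> int) (i j : I) :
  i != j -> w i ^+ 2 + w j ^+ 2 <= \sum_k w k ^+ 2.
Proof.
move=> neq_ij; rewrite (bigD1 i) //= (bigD1 j) 1?eq_sym //= addrA lerDl.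
by apply: sumr_ge0 => k _; exact: sqr_ge0.
Qed.

Theorem lemma9 (F : finFieldType) (m d : nat) (A B C : int) :
  (1 <= m)%N -> #|F| = (2 ^ m)%N -> (0 < d)%N -> coprime d (2 ^ m - 1) ->
  A != B -> B != C -> A != C ->
  (forall a : F, a != 0 -> walsh m d a \in [:: A; B; C]) ->
  (exists2 a : F, a != 0 & walsh m d a = A) ->
  (exists2 a : F, a != 0 & walsh m d a = B) ->
  (exists2 a : F, a != 0 & walsh m d a = C) ->
  A != 0 -> B != 0 -> C != 0 ->
  ((2 ^ m.+1)%:Z %| A * B)%Z.
Proof.
move=> m_gt0 cardF d_gt0 coprime_d _ _ neqAC walsh_val [aA _ WA] [aB _ WB] [aC _ WC].
move=> A_neq0 _ C_neq0.
have {}coprime_d : coprime d #|F|.-1 by rewrite cardF -subn1.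
set q := (2 ^ m)%:Z; have cardFq : #|F|%:Z = q by rewrite cardF.
have moment : \sum_(a : F) (walsh m d a - A) * (walsh m d a - B) * (walsh m d a - C)
    = - (A * B * C).
  rewrite (bigD1 0) //= walsh0 // big1 ?addr0 => [|a /walsh_val]; first by ring.
  by rewrite !inE => /or3P[] /eqP ->; rewrite !(subrr, mulr0, mul0r).
rewrite sum_cubic_values (sum_walsh cardF d_gt0) (sum_walsh_sqr _ cardF) cardFq in moment.
have dvd_cube : (q * q %| \sum_(a : F) walsh m d a ^+ 3)%Z.
  by rewrite -cardFq dvdz_sum_walsh_cube.
have evenA : (2 %| A)%Z by rewrite -WA walsh_even.
have evenB : (2 %| B)%Z by rewrite -WB walsh_even.
have [//|dvd_qC] := dvdz_cubic_moment m_gt0 erefl evenA evenB dvd_cube moment.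
have aAC : aA != aC by apply: contra_neq neqAC => eq_a; rewrite -WA -WC eq_a.
have := sqrD_le_sum_sqr (walsh m d) aAC.
by rewrite (sum_walsh_sqr _ cardF) WA WC cardFq -expr2 leNgt dvdz_sqr_lt_sqrD.
Qed.
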